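(* Let $r$ be an $\mathfrak s$-matrix on a pre-Lie algebra $(\mathfrak g,\cdot_{\mathfrak g})$. Then the map $\varrho:\mathfrak g^*\to\mathfrak{gl}(\mathfrak g)$, $\varrho(\alpha)(x)=[r^\sharp(\alpha),x]_{\mathfrak g}+r^\sharp(L^*_x\alpha)$, is a representation of the Lie algebra $(\mathfrak g^*,[\cdot,\cdot]_r)$ on $\mathfrak g$.
   Context: A pre-Lie algebra is a finite-dimensional vector space $\mathfrak g$ over a field of characteristic $0$ with product $\cdot$ satisfying $(x\cdot y)\cdot z-x\cdot(y\cdot z)=(y\cdot x)\cdot z-y\cdot(x\cdot z)$; $[x,y]_{\mathfrak g}=x\cdot y-y\cdot x$. Define $\langle L^*_x\alpha,y\rangle=-\langle\alpha,x\cdot y\rangle$. For $r\in\mathrm{Sym}^2(\mathfrak g)$, $\langle r^\sharp(\alpha),\beta\rangle=r(\alpha,\beta)$. For $r=\sum_ia_i\otimes b_i$, $[r,r]=-\sum_{i,j}a_i\cdot a_j\otimes b_i\otimes b_j+\sum_{i,j}a_i\otimes b_i\cdot a_j\otimes b_j+\sum_{i,j}a_i\otimes a_j\otimes[b_i,b_j]_{\mathfrak g}$; $r$ is an $\mathfrak s$-matrix if $r\in\mathrm{Sym}^2(\mathfrak g)$ and $[r,r]=0$. $[\alpha,\beta]_r=L^*_{r^\sharp(\alpha)}\beta-L^*_{r^\sharp(\beta)}\alpha$ (this is a Lie bracket on $\mathfrak g^*$ when $r$ is an $\mathfrak s$-matrix). *)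

(* g is modelled as F^n = 'rV[F]_n (finite-dimensional, basis e_i),
   g^* as 'rV[F]_n with the dual basis; pairing <alpha, x> = sum_i alpha_i x_i. *)
From HB Require Import structures.
From mathcomp Require Import all_boot all_order all_algebra.
Set Implicit Arguments. Unset Strict Implicit. Unset Printing Implicit Defensive.
Import Order.TTheory GRing.Theory Num.Theory.
Local Open Scope ring_scope.

Section Defs.
Variables (F : fieldType) (n : nat).
Notation V := 'rV[F]_n.

Definition ebas (i : 'I_n) : V := delta_mx 0 i.

Definition pairing (alpha x : V) : F := \sum_(i < n) alpha 0 i * x 0 i.

Definition is_bilinear (mul : V -> V -> V) : Prop :=
  (forall (a : F) (x y z : V), mul (a *: x + y) z = a *: mul x z + mul y z) /\
  (forall (a : F) (x y z : V), mul x (a *: y + z) = a *: mul x y + mul x z).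

Definition is_preLie (mul : V -> V -> V) : Prop :=
  forall x y z : V,
    mul (mul x y) z - mul x (mul y z) = mul (mul y x) z - mul y (mul x z).

Definition brg (mul : V -> V -> V) (x y : V) : V := mul x y - mul y x.

(* L^*_x alpha, defined by <L^*_x alpha, y> = - <alpha, x.y> *)
Definition Lstar (mul : V -> V -> V) (x alpha : V) : V :=
  \row_(j < n) - pairing alpha (mul x (ebas j)).

(* r in g (x) g given by coefficients: r = sum_{i,j} r i j e_i (x) e_j.
   r^sharp defined by <r^sharp(alpha), beta> = r(alpha, beta) = sum alpha_i r_ij beta_j. *)
Definition rsharp (r : 'M[F]_n) (alpha : V) : V := alpha *m r.

(* Coefficient at e_p (x) e_q (x) e_s of [r,r], where r = sum_{(i,j)} a_(i,j) (x) b_(i,j)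
   with a_(i,j) = r i j e_i and b_(i,j) = e_j. *)
Definition rr (mul : V -> V -> V) (r : 'M[F]_n) (p q s : 'I_n) : F :=
  - (\sum_(i < n) \sum_(j < n) \sum_(k < n) \sum_(l < n)
        (mul (r i j *: ebas i) (r k l *: ebas k)) 0 p * (ebas j) 0 q * (ebas l) 0 s)
  + (\sum_(i < n) \sum_(j < n) \sum_(k < n) \sum_(l < n)
        (r i j *: ebas i) 0 p * (mul (ebas j) (r k l *: ebas k)) 0 q * (ebas l) 0 s)
  + (\sum_(i < n) \sum_(j < n) \sum_(k < n) \sum_(l < n)
        (r i j *: ebas i) 0 p * (r k l *: ebas k) 0 q * (brg mul (ebas j) (ebas l)) 0 s).

Definition is_s_matrix (mul : V -> V -> V) (r : 'M[F]_n) : Prop :=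
  r^T = r /\ (forall p q s : 'I_n, rr mul r p q s = 0).

Definition brr (mul : V -> V -> V) (r : 'M[F]_n) (alpha beta : V) : V :=
  Lstar mul (rsharp r alpha) beta - Lstar mul (rsharp r beta) alpha.

Definition rho (mul : V -> V -> V) (r : 'M[F]_n) (alpha x : V) : V :=
  brg mul (rsharp r alpha) x + rsharp r (Lstar mul x alpha).

Definition is_representation (br : V -> V -> V) (rh : V -> V -> V) : Prop :=
  (forall (alpha : V) (c : F) (x y : V), rh alpha (c *: x + y) = c *: rh alpha x + rh alpha y) /\
  (forall (c : F) (alpha beta x : V), rh (c *: alpha + beta) x = c *: rh alpha x + rh beta x) /\
  (forall alpha beta x : V, rh (br alpha beta) x = rh alpha (rh beta x) - rh beta (rh alpha x)).

End Defs.

From HB Require Import structures.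
From mathcomp Require Import all_boot all_order all_algebra.
From mathcomp Require Import ring.
Import GRing.Theory.
Set Implicit Arguments. Unset Strict Implicit. Unset Printing Implicit Defensive.
Local Open Scope ring_scope.

(* Since r is symmetric, pairing [r,r] with a (x) b (x) c gives exactly
   <[r#a, r#b] - r#[a,b]_r, c>, so [r,r] = 0 says that r# is a morphism of Lie
   algebras from (g^*, [.,.]_r) to the sub-adjacent Lie algebra of g.  The pre-Lie
   identity says that left multiplication, and dually L^*, are representations of
   that sub-adjacent Lie algebra, and yields its Jacobi identity.  Expanding
   rho(a) rho(b) x, the morphism property turns [r#a, r#(L^*_x b)] into
   r#[a, L^*_x b]_r; after antisymmetrising in a and b, what remains is
   rho([a,b]_r) x. *)

Fact pairing_is_bilinear (F : fieldType) (n : nat) : bilinear_for *%R *%R (@pairing F n).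
Proof.
split=> [u c x y | u c x y]; rewrite /= /pairing mulr_sumr -big_split;
  by apply: eq_bigr => i _; rewrite !mxE /=; ring.
Qed.

HB.instance Definition _ (F : fieldType) (n : nat) :=
  bilinear_isBilinear.Build F 'rV[F]_n 'rV[F]_n F *%R *%R (@pairing F n)
    (@pairing_is_bilinear F n).

Section PairingTheory.
Variables (F : fieldType) (n : nat).
Local Notation V := 'rV[F]_n.
Local Notation e := (ebas F).

Lemma pairing_mxE (a b : V) : pairing a b = (a *m b^T) 0 0.
Proof. by rewrite mxE; apply: eq_bigr => i _; rewrite mxE. Qed.

Lemma pairingC (a b : V) : pairing a b = pairing b a.
Proof. by apply: eq_bigr => i _; rewrite mulrC. Qed.

Lemma sum_coef_ebas (f : 'I_n -> F) s : \sum_l f l * e l 0 s = f s.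
Proof.
rewrite (bigD1 s) //= big1 ?mxE ?eqxx ?mulr1 ?addr0 // => l /negPf nls.
by rewrite mxE eqxx eq_sym nls mulr0.
Qed.

Lemma ebas_coefC (i j : 'I_n) : e i 0 j = e j 0 i.
Proof. by rewrite !mxE eq_sym. Qed.

Lemma pairing_ebasr (a : V) j : pairing a (e j) = a 0 j.
Proof. by rewrite -[RHS]sum_coef_ebas; apply: eq_bigr => i _; rewrite ebas_coefC. Qed.

Lemma pairingl_inj (a b : V) : (forall z, pairing a z = pairing b z) -> a = b.
Proof. by move=> eq_ab; apply/rowP => j; rewrite -!pairing_ebasr. Qed.

Lemma scalar_ebas_expand (f : V -> F) : scalar f ->
  forall x, f x = \sum_j x 0 j * f (e j).
Proof.
move=> f_lin x; pose fL : {scalar V} := HB.pack f (GRing.isLinear.Build _ _ _ _ f f_lin).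
rewrite -[f x]/(fL x) {1}(row_sum_delta x) linear_sum.
by apply: eq_bigr => j _; rewrite linearZ.
Qed.

Lemma trilinear_eq0 (f : V -> V -> V -> F) :
    (forall b c, scalar (fun a => f a b c)) ->
    (forall a c, scalar (fun b => f a b c)) ->
    (forall a b, scalar (f a b)) ->
    (forall p q s, f (e p) (e q) (e s) = 0) -> forall a b c, f a b c = 0.
Proof.
move=> f1 f2 f3 f_ebas a b c.
rewrite (scalar_ebas_expand (f1 b c)) big1 // => p _.
rewrite (scalar_ebas_expand (f2 _ c)) big1 ?mulr0 // => q _.
by rewrite (scalar_ebas_expand (f3 _ _)) big1 ?mulr0 // => s _; rewrite f_ebas mulr0.
Qed.
End PairingTheory.

Fact rsharp_is_linear (F : fieldType) (n : nat) (r : 'M[F]_n) : linear (rsharp r).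
Proof. by move=> c a b; rewrite /rsharp mulmxDl scalemxAl. Qed.

HB.instance Definition _ (F : fieldType) (n : nat) (r : 'M[F]_n) :=
  GRing.isLinear.Build F 'rV[F]_n 'rV[F]_n *:%R (rsharp r) (rsharp_is_linear r).

Section PreLie.
Variables (F : fieldType) (n : nat).
Local Notation V := 'rV[F]_n.
Local Notation e := (ebas F).
Variable mul : V -> V -> V.
Hypothesis mul_bil : is_bilinear mul.

Fact mul_is_bilinear : bilinear_for *:%R *:%R mul.
Proof. by split=> [u a x y | u a x y]; rewrite ?mul_bil.1 ?mul_bil.2. Qed.

HB.instance Definition _ :=
  bilinear_isBilinear.Build F V V V *:%R *:%R mul mul_is_bilinear.

Fact brg_is_bilinear : bilinear_for *:%R *:%R (brg mul).
Proof.
split=> [u a x y | u a x y]; rewrite /brg /= linearPl linearPr scalerBr;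
  apply/rowP => j; rewrite !mxE; ring.
Qed.

HB.instance Definition _ :=
  bilinear_isBilinear.Build F V V V *:%R *:%R (brg mul) brg_is_bilinear.

Fact Lstar_is_bilinear : bilinear_for *:%R *:%R (Lstar mul).
Proof.
split=> [u a x y | u a x y]; apply/rowP => j; rewrite !mxE ?linearPl ?linearPr /=; ring.
Qed.

HB.instance Definition _ :=
  bilinear_isBilinear.Build F V V V *:%R *:%R (Lstar mul) Lstar_is_bilinear.

Lemma pairing_Lstar x a y : pairing (Lstar mul x a) y = - pairing a (mul x y).
Proof.
have mulx_scalar : scalar (fun y => pairing a (mul x y)).
  by move=> c u v; rewrite /= linearPr linearPr.
rewrite (scalar_ebas_expand mulx_scalar) -sumrN; apply: eq_bigr => j _.
by rewrite mxE mulrC mulrN.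
Qed.

Hypothesis mul_preLie : is_preLie mul.

Lemma preLie_mulA x y z :
  mul (mul x y) z = mul x (mul y z) + (mul (mul y x) z - mul y (mul x z)).
Proof. by rewrite -mul_preLie addrC subrK. Qed.

Lemma mul_brg x y z : mul (brg mul x y) z = mul x (mul y z) - mul y (mul x z).
Proof. by rewrite /brg linearBl /= preLie_mulA addrA addrAC addrK. Qed.

Lemma brg_jacobi u v x :
  brg mul (brg mul u v) x = brg mul u (brg mul v x) - brg mul v (brg mul u x).
Proof.
rewrite /brg !linearBr !linearBl /= (preLie_mulA u v) (preLie_mulA v x) (preLie_mulA u x).
by apply/rowP => j; rewrite !mxE; ring.
Qed.

Lemma Lstar_brg x y a :
  Lstar mul (brg mul x y) a = Lstar mul x (Lstar mul y a) - Lstar mul y (Lstar mul x a).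
Proof.
apply: pairingl_inj => z.
by rewrite pairing_Lstar mul_brg linearBr [RHS]linearBl /= !pairing_Lstar opprB !opprK.
Qed.

Section SMatrix.
Variable r : 'M[F]_n.
Local Notation R := (rsharp r).

Lemma rho_linear a : linear (rho mul r a).
Proof.
move=> c x y; rewrite /rho linearPr linearPl /= [R (_ + _)]linearP /=.
by rewrite [in RHS]scalerDr addrACA.
Qed.

Lemma rho_linearl x : linear (rho mul r ^~ x).
Proof.
move=> c a b; rewrite /rho [R (_ + _)]linearP /= linearPl /= linearPr /=.
rewrite [R (_ + _)]linearP /=.
by rewrite [in RHS]scalerDr addrACA.
Qed.

Hypothesis r_sym : r^T = r.
Hypothesis rr_eq0 : forall p q s, rr mul r p q s = 0.

Lemma pairing_rsharp a b : pairing (R a) b = pairing a (R b).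
Proof. by rewrite !pairing_mxE /rsharp trmx_mul r_sym mulmxA. Qed.

Lemma rsharp_ebas q : R (e q) = \sum_i r q i *: e i.
Proof.
by rewrite /rsharp -rowE [LHS]row_sum_delta; apply: eq_bigr => i _; rewrite mxE.
Qed.

Lemma rsharp_ebas_col q : R (e q) = \sum_i r i q *: e i.
Proof. by rewrite rsharp_ebas; apply: eq_bigr => i _; rewrite -{1}r_sym mxE. Qed.

(* The pairing of [r,r] with a (x) b (x) c, cf. [rr_form_ebas]. *)
Definition rr_form a b c :=
  - pairing a (mul (R b) (R c)) + pairing b (mul (R a) (R c))
  + pairing c (brg mul (R a) (R b)).

Lemma rr_sum1E p q s :
  \sum_(i < n) \sum_(j < n) \sum_(k < n) \sum_(l < n)
      mul (r i j *: e i) (r k l *: e k) 0 p * e j 0 q * e l 0 s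
  = mul (R (e q)) (R (e s)) 0 p.
Proof.
rewrite !rsharp_ebas_col linear_sumlz summxE; apply: eq_bigr => i _.
rewrite linear_sumr summxE.
under eq_bigr => j _ do under eq_bigr => k _ do rewrite sum_coef_ebas.
by under eq_bigr => j _ do rewrite -mulr_suml; rewrite sum_coef_ebas.
Qed.

Lemma rr_sum2E p q s :
  \sum_(i < n) \sum_(j < n) \sum_(k < n) \sum_(l < n)
      (r i j *: e i) 0 p * mul (e j) (r k l *: e k) 0 q * e l 0 s
  = mul (R (e p)) (R (e s)) 0 q.
Proof.
rewrite rsharp_ebas rsharp_ebas_col linear_sumlz summxE.
under eq_bigr => i _ do under eq_bigr => j _ do under eq_bigr => k _ do
  rewrite sum_coef_ebas.
transitivity (\sum_i (\sum_j \sum_k r i j * mul (e j) (r k s *: e k) 0 q) * e i 0 p).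
  apply: eq_bigr => i _; rewrite mulr_suml; apply: eq_bigr => j _.
  by rewrite mulr_suml; apply: eq_bigr => k _; rewrite mxE; ring.
rewrite sum_coef_ebas; apply: eq_bigr => j _ /=.
by rewrite linearZl_LR mxE linear_sumr summxE mulr_sumr.
Qed.

Lemma rr_sum3E p q s :
  \sum_(i < n) \sum_(j < n) \sum_(k < n) \sum_(l < n)
      (r i j *: e i) 0 p * (r k l *: e k) 0 q * brg mul (e j) (e l) 0 s
  = brg mul (R (e p)) (R (e q)) 0 s.
Proof.
transitivity (\sum_i (\sum_j r i j *
    \sum_k (\sum_l r k l * brg mul (e j) (e l) 0 s) * e k 0 q) * e i 0 p).
  apply: eq_bigr => i _; rewrite mulr_suml; apply: eq_bigr => j _.
  rewrite mulr_sumr mulr_suml; apply: eq_bigr => k _.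
  rewrite mulr_suml mulr_sumr mulr_suml; apply: eq_bigr => l _; rewrite !mxE; ring.
rewrite sum_coef_ebas !rsharp_ebas linear_sumlz summxE; apply: eq_bigr => j _.
rewrite sum_coef_ebas linearZl_LR mxE linear_sumr summxE; congr (_ * _).
by apply: eq_bigr => l _; rewrite /= linearZr_LR [RHS]mxE.
Qed.

Lemma rr_form_ebas p q s : rr_form (e p) (e q) (e s) = rr mul r p q s.
Proof.
by rewrite /rr rr_sum1E rr_sum2E rr_sum3E /rr_form !(pairingC (e _)) !pairing_ebasr.
Qed.

Lemma rr_form_eq0 a b c : rr_form a b c = 0.
Proof.
apply: trilinear_eq0 => [b' c' k x y | a' c' k x y | a' b' k x y | p q s];
  last by rewrite rr_form_ebas rr_eq0.
all: rewrite /rr_form !linearP /= !(linearPl, linearPr) /=; ring.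
Qed.

Lemma rsharp_brr a b : R (brr mul r a b) = brg mul (R a) (R b).
Proof.
apply: pairingl_inj => c.
rewrite pairing_rsharp linearBl /= !pairing_Lstar.
by rewrite -[RHS]subr0 -(rr_form_eq0 a b c) /rr_form (pairingC c); ring.
Qed.

Lemma rho_rho a b x :
  rho mul r a (rho mul r b x) = brg mul (R a) (brg mul (R b) x)
    + R (Lstar mul (R a) (Lstar mul x b) + Lstar mul (R b) (Lstar mul x a)
         - Lstar mul x (Lstar mul (R b) a)).
Proof.
rewrite /rho linearDr /= -rsharp_brr /brr linearDl /= Lstar_brg -addrA -linearD.
congr (_ + R _); apply/rowP => j; rewrite !mxE; ring.
Qed.

Lemma rho_brr a b x :
  rho mul r (brr mul r a b) x = rho mul r a (rho mul r b x) - rho mul r b (rho mul r a x).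
Proof.
rewrite !rho_rho /rho rsharp_brr brg_jacobi /brr.
rewrite [in RHS]opprD [in RHS]addrACA -[in RHS]linearB /=.
congr (_ + R _); rewrite [Lstar mul x _]linearBr /=.
by apply/rowP => j; rewrite !mxE; ring.
Qed.

End SMatrix.
End PreLie.

Theorem proposition4p3 (F : fieldType) (n : nat)
  (HF : [pchar F] =i pred0)
  (mul : 'rV[F]_n -> 'rV[F]_n -> 'rV[F]_n)
  (Hbil : is_bilinear mul) (Hpre : is_preLie mul)
  (r : 'M[F]_n) (Hr : is_s_matrix mul r) :
  is_representation (brr mul r) (rho mul r).
Proof.
have [r_sym rr_eq0] := Hr.
split; [|split].
- by move=> alpha; apply: rho_linear.
- by move=> c alpha beta x; apply: rho_linearl.
- exact: rho_brr.
Qed.
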